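(* Let $\mathcal S=\{d_1,\dots,d_k\}\subset\mathbb R^n$ be a positive spanning set of unit vectors and let $u^*$ be a cosine vector of $\mathcal S$. Then there exists a basis $\mathcal B\subset\mathcal S$ of $\mathbb R^n$ such that $u^*$ is the Gram vector of $\mathcal B$ with Gram value equal to $\operatorname{cm}(\mathcal S)$.
   Context: A finite set is positive spanning if its positive span $\{\sum\lambda_id_i:\lambda_i\ge0\}$ is $\mathbb R^n$. The cosine measure is $\operatorname{cm}(\mathcal S)=\min_{\|u\|=1}\max_{d\in\mathcal S}\frac{d^\top u}{\|d\|}$ and its minimizers are cosine vectors. For a basis $\mathcal B=\{b_1,\dots,b_n\}$ of $\mathbb R^n$, a Gram vector of $\mathcal B$ with Gram value $\gamma$ is a unit vector $u$ with $u^\top b_i=\gamma>0$ for all $i$. *)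

From mathcomp Require Import all_boot all_order all_algebra.
From mathcomp Require Import all_classical all_reals.
Set Implicit Arguments. Unset Strict Implicit. Unset Printing Implicit Defensive.
Import Order.TTheory GRing.Theory Num.Theory.
Local Open Scope ring_scope.
Local Open Scope classical_set_scope.

Section CosineMeasure.
Variables (R : realType) (n k : nat).

Definition dotv (u v : 'rV[R]_n) : R := \sum_(i < n) u 0 i * v 0 i.
Definition enorm (u : 'rV[R]_n) : R := Num.sqrt (dotv u u).

Definition positive_spanning (d : 'I_k -> 'rV[R]_n) : Prop :=
  forall x : 'rV[R]_n, exists lam : 'I_k -> R,
    (forall i, 0 <= lam i) /\ x = \sum_(i < k) lam i *: d i.

Definition cosv (dv u : 'rV[R]_n) : R := dotv dv u / enorm dv.

Definition is_max_cos (d : 'I_k -> 'rV[R]_n) (u : 'rV[R]_n) (m : R) : Prop :=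
  (exists i, m = cosv (d i) u) /\ (forall i, cosv (d i) u <= m).

(* cm(S) = min over unit u of max_d d^T u/||d||  (taken as an infimum) *)
Definition cm (d : 'I_k -> 'rV[R]_n) : R :=
  inf [set m | exists u : 'rV[R]_n, enorm u = 1 /\ is_max_cos d u m].

Definition cosine_vector (d : 'I_k -> 'rV[R]_n) (u : 'rV[R]_n) : Prop :=
  enorm u = 1 /\ exists m, is_max_cos d u m /\ m = cm d.

Definition gram_vector (B : 'M[R]_n) (u : 'rV[R]_n) (g : R) : Prop :=
  enorm u = 1 /\ 0 < g /\ forall j : 'I_n, dotv u (row j B) = g.

End CosineMeasure.

(** The cosine measure is attained at u* with value m = cm(S) > 0 (positivity
    comes from positive spanning).  If the "active" vectors d with d^T u* = m
    did not span R^n, pick w != 0 orthogonal to all of them with u*^T w >= 0.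
    For small s > 0 the inactive vectors still satisfy d^T (u* + s w) < m,
    the active ones keep d^T (u* + s w) = m, and ||u* + s w|| > 1; so the unit
    vector (u* + s w) / ||u* + s w|| has all cosines < m, contradicting
    minimality.  Hence the active vectors span R^n and n linearly independent
    ones among them form the required basis. *)

From mathcomp Require Import all_boot all_order all_algebra.
From mathcomp Require Import all_classical all_reals.
From mathcomp Require Import ring lra.

Set Implicit Arguments.
Unset Strict Implicit.
Unset Printing Implicit Defensive.
Import Order.TTheory GRing.Theory Num.Theory.
Local Open Scope ring_scope.

Lemma exists_small_step (R : realFieldType) (I : finType) (P : pred I)
    (a g : I -> R) :
  (forall i, P i -> 0 < g i) -> exists2 s, 0 < s & forall i, P i -> s * a i < g i.
Proof.
move=> g_gt0.
pose h i := (`|a i| + 1) / g i.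
pose S := \sum_(i | P i) h i.
have h_ge0 i : P i -> 0 <= h i.
  by move=> Pi; rewrite /h divr_ge0 ?addr_ge0 // ltW ?g_gt0.
have S_ge0 : 0 <= S by rewrite sumr_ge0.
have h_leS i : P i -> h i <= S.
  move=> Pi; rewrite /S (bigD1 i) //= lerDl.
  by apply: sumr_ge0 => j /andP[/h_ge0].
have S1_gt0 : 0 < 1 + S by rewrite ltr_wpDr.
pose s := (1 + S)^-1.
have s_gt0 : 0 < s by rewrite invr_gt0.
have sS1 : s * (1 + S) = 1 by rewrite mulVf ?gt_eqF.
exists s => // i Pi; have gi := g_gt0 i Pi.
have sh_lt1 : s * h i < 1 by have := h_leS i Pi; nra.
have -> : s * a i = s * h i * g i - s * (1 + `|a i| - a i).
  by rewrite /h -mulrA divfK ?gt_eqF //; ring.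
have : 0 <= s * (1 + `|a i| - a i).
  by apply: mulr_ge0; [exact: ltW | rewrite subr_ge0 ler_wpDl // ler_norm].
move: sh_lt1; set x := s * h i; set y := s * _; nra.
Qed.

Section Inner.
Variables (R : realType) (n : nat).
Implicit Types (u v w : 'rV[R]_n).

Lemma dotvC u v : dotv u v = dotv v u.
Proof. by apply: eq_bigr => i _; rewrite mulrC. Qed.

Lemma dotvDr u v w : dotv u (v + w) = dotv u v + dotv u w.
Proof. by rewrite /dotv -big_split; apply: eq_bigr => i _; rewrite mxE mulrDr. Qed.

Lemma dotvZr u a v : dotv u (a *: v) = a * dotv u v.
Proof. by rewrite /dotv mulr_sumr; apply: eq_bigr => i _; rewrite mxE mulrCA. Qed.

Lemma dotvNr u v : dotv u (- v) = - dotv u v.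
Proof. by rewrite -scaleN1r dotvZr mulN1r. Qed.

Lemma dotvDl u v w : dotv (u + v) w = dotv u w + dotv v w.
Proof. by rewrite dotvC dotvDr !(dotvC w). Qed.

Lemma dotvZl a u v : dotv (a *: u) v = a * dotv u v.
Proof. by rewrite dotvC dotvZr dotvC. Qed.

Lemma dotv_sumr (k : nat) u (F : 'I_k -> 'rV[R]_n) :
  dotv u (\sum_(i < k) F i) = \sum_(i < k) dotv u (F i).
Proof.
rewrite /dotv; under eq_bigr => j _ do rewrite summxE mulr_sumr.
exact: exchange_big.
Qed.

Lemma dotv0l u : dotv 0 u = 0.
Proof. by rewrite /dotv big1 // => i _; rewrite mxE mul0r. Qed.

Lemma dotvv_ge0 u : 0 <= dotv u u.
Proof. by rewrite sumr_ge0 // => i _; rewrite -expr2 sqr_ge0. Qed.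

Lemma dotvv_gt0 u : u != 0 -> 0 < dotv u u.
Proof.
move=> u_neq0; rewrite lt_def dotvv_ge0 andbT; apply: contra u_neq0 => /eqP uu0.
have sq0 i : u 0 i * u 0 i = 0.
  by apply: (psumr_eq0P _ uu0) => // j _; rewrite -expr2 sqr_ge0.
by apply/eqP/rowP => i; rewrite !mxE; apply/eqP; rewrite -sqrf_eq0 expr2 sq0.
Qed.

Lemma enorm_sqr u : enorm u ^+ 2 = dotv u u.
Proof. exact/sqr_sqrtr/dotvv_ge0. Qed.

Lemma enormZ a u : enorm (a *: u) = `|a| * enorm u.
Proof. by rewrite /enorm dotvZl dotvZr mulrA -expr2 sqrtrM ?sqr_ge0 // sqrtr_sqr. Qed.

Lemma enorm_gt0 u : u != 0 -> 0 < enorm u.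
Proof. by move=> /dotvv_gt0; rewrite sqrtr_gt0. Qed.

Lemma enorm1_neq0 u : enorm u = 1 -> u != 0.
Proof.
by apply: contra_eq_neq => ->; rewrite /enorm dotv0l sqrtr0 eq_sym oner_eq0.
Qed.

Lemma enorm_normalize u : u != 0 -> enorm ((enorm u)^-1 *: u) = 1.
Proof. by move=> /enorm_gt0 u_gt0; rewrite enormZ gtr0_norm ?invr_gt0 // mulVf ?gt_eqF. Qed.

Lemma mulmx_trE (k : nat) (A : 'M[R]_(k, n)) u i : (u *m A^T) 0 i = dotv u (row i A).
Proof. by rewrite mxE; apply: eq_bigr => l _; rewrite !mxE. Qed.

Lemma not_row_full_orth (k : nat) (A : 'M[R]_(k, n)) :
  ~~ row_full A -> exists2 w, w != 0 & forall i, dotv w (row i A) = 0.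
Proof.
move=> A_not_full.
have : kermx A^T != 0.
  rewrite -mxrank_eq0 mxrank_ker mxrank_tr -lt0n subn_gt0 ltn_neqAle.
  by rewrite A_not_full rank_leq_col.
case/rowV0Pn => w /sub_kermxP wA w_neq0; exists w => // i.
by rewrite -mulmx_trE wA mxE.
Qed.

End Inner.

Lemma row_free_row_neq0 (F : fieldType) (m p : nat) (M : 'M[F]_(m, p)) j :
  row_free M -> row j M != 0.
Proof.
apply: contraTneq => Mj0; apply/row_freePn; exists j.
by rewrite Mj0 sub0mx.
Qed.

Section CosineMeasure.
Variables (R : realType) (n k : nat) (d : 'I_k -> 'rV[R]_n).

Definition active_mx (u : 'rV[R]_n) (m : R) : 'M[R]_(k, n) :=
  \matrix_(i < k) (if dotv (d i) u == m then d i else 0).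

Lemma perturb_below_max (u w : 'rV[R]_n) (m : R) :
    enorm u = 1 -> 0 < m -> w != 0 ->
    (forall i, dotv (d i) u <= m) ->
    (forall i, dotv (d i) u = m -> dotv (d i) w = 0) ->
  exists v, enorm v = 1 /\ forall i, dotv (d i) v < m.
Proof.
move=> u1 m_gt0 w_neq0 du_le dw0.
wlog uw_ge0 : w w_neq0 dw0 / 0 <= dotv u w => [wlog_uw|].
  have [|uw_lt0] := lerP 0 (dotv u w); first exact: wlog_uw.
  apply: (wlog_uw (- w)); rewrite ?oppr_eq0 //.
    by move=> i /dw0; rewrite dotvNr => ->; rewrite oppr0.
  by rewrite dotvNr oppr_ge0 ltW.
have [s s_gt0 s_small] : exists2 s, 0 < s & forall i,
    dotv (d i) u != m -> s * dotv (d i) w < m - dotv (d i) u.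
  by apply: exists_small_step => i inact; rewrite subr_gt0 lt_def eq_sym inact du_le.
have uu : dotv u u = 1 by rewrite -enorm_sqr u1 expr1n.
have ww := dotvv_gt0 w_neq0.
pose v := u + s *: w.
have vv_gt1 : 1 < dotv v v.
  rewrite !(dotvDl, dotvDr, dotvZl, dotvZr) uu (dotvC w u).
  have := mulr_ge0 (ltW s_gt0) uw_ge0; have := mulr_gt0 (mulr_gt0 s_gt0 s_gt0) ww.
  nra.
have v_gt1 : 1 < enorm v by rewrite -sqrtr1 ltr_sqrt ?(lt_trans ltr01).
have v_neq0 : v != 0 by apply: contraTneq vv_gt1 => ->; rewrite dotv0l ltr10.
exists ((enorm v)^-1 *: v); split; first exact: enorm_normalize.
move=> i; rewrite dotvZr dotvDr dotvZr.
have c_gt0 : 0 < (enorm v)^-1 by rewrite invr_gt0 (lt_trans ltr01).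
have c_lt1 : (enorm v)^-1 < 1 by rewrite invf_lt1 ?(lt_trans ltr01).
have [/eqP act|inact] := boolP (dotv (d i) u == m).
  by rewrite dw0 // mulr0 addr0 act; nra.
have := s_small i inact; have := du_le i.
set a := dotv (d i) u; set b := s * _; nra.
Qed.

Lemma cosv_gt0 (i : 'I_k) (v : 'rV[R]_n) :
  0 < dotv (d i) v -> 0 < cosv (d i) v.
Proof.
move=> dv_gt0; rewrite divr_gt0 // enorm_gt0 //.
by apply: contraTneq dv_gt0 => ->; rewrite dotv0l ltxx.
Qed.

Hypothesis hps : positive_spanning d.

Lemma positive_spanning_dot_gt0 (v : 'rV[R]_n) :
  v != 0 -> exists i, 0 < dotv (d i) v.
Proof.
move=> v_neq0; have [lam [lam_ge0 v_eq]] := hps v.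
apply/existsP; apply: contraTT (dotvv_gt0 v_neq0) => /existsPn no_pos.
rewrite -leNgt {2}v_eq dotv_sumr; apply: sumr_le0 => i _.
by rewrite dotvZr dotvC; apply: mulr_ge0_le0; rewrite ?lam_ge0 // leNgt no_pos.
Qed.

Lemma cm_le_cos (v : 'rV[R]_n) : enorm v = 1 -> exists i, cm d <= cosv (d i) v.
Proof.
move=> v1; have [i0 _] := positive_spanning_dot_gt0 (enorm1_neq0 v1).
have [j _ j_max] := arg_maxP (fun i => cosv (d i) v) (isT : i0 \in xpredT).
exists j; apply: ge_inf; last first.
  by exists v; split=> //; split=> [|i]; [exists j | exact: j_max].
(* [cm d] is an infimum, so a lower bound is needed: every candidate value
   dominates a positive cosine. *)
exists 0 => _ [w [w1 [[i ->] cos_le]]].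
have [i' /cosv_gt0 /ltW cos_ge0] := positive_spanning_dot_gt0 (enorm1_neq0 w1).
exact: le_trans cos_ge0 (cos_le i').
Qed.

Lemma cosine_vector_cm_gt0 (u : 'rV[R]_n) : cosine_vector d u -> 0 < cm d.
Proof.
case=> u1 [m [[_ cos_le] <-]].
have [i /cosv_gt0 cos_gt0] := positive_spanning_dot_gt0 (enorm1_neq0 u1).
exact: lt_le_trans cos_gt0 (cos_le i).
Qed.

Hypothesis hunit : forall i, enorm (d i) = 1.

Lemma cosvE (i : 'I_k) (v : 'rV[R]_n) : cosv (d i) v = dotv (d i) v.
Proof. by rewrite /cosv hunit divr1. Qed.

Lemma cosine_vector_active_row_full (u : 'rV[R]_n) :
  cosine_vector d u -> row_full (active_mx u (cm d)).
Proof.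
move=> u_cos; have m_gt0 := cosine_vector_cm_gt0 u_cos.
case: u_cos => u1 [m [[_ cos_le] cmE]].
apply: contraT => /not_row_full_orth[w w_neq0 w_orth].
have du_le i : dotv (d i) u <= cm d by rewrite -cosvE -cmE.
have dw0 i : dotv (d i) u = cm d -> dotv (d i) w = 0.
  by move=> act; have := w_orth i; rewrite rowK act eqxx dotvC.
have [v [v1 dv_lt]] := perturb_below_max u1 m_gt0 w_neq0 du_le dw0.
have [i cm_le] := cm_le_cos v1.
by have := dv_lt i; rewrite -cosvE ltNge cm_le.
Qed.

End CosineMeasure.

Theorem corollary1 (R : realType) (n k : nat) (d : 'I_k -> 'rV[R]_n)
  (hunit : forall i, enorm (d i) = 1)
  (hps : positive_spanning d)
  (ustar : 'rV[R]_n) (hcos : cosine_vector d ustar) :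
  exists f : 'I_n -> 'I_k,
    injective f /\
    let B := \matrix_(j < n) d (f j) in
    row_free B /\ row_full B /\ gram_vector B ustar (cm d).
Proof.
have full := cosine_vector_active_row_full hps hunit hcos.
set A := active_mx d ustar (cm d) in full; set f := fullrankfun full.
have active j : dotv (d (f j)) ustar = cm d.
  have := row_free_row_neq0 j (fullrowsub_free full).
  by rewrite row_rowsub rowK; case: ifP => [/eqP // | _]; rewrite eqxx.
exists f; split; first exact: fullrankfun_inj.
have -> /= : \matrix_(j < n) d (f j) = rowsub f A.
  by apply/row_matrixP => j; rewrite row_rowsub !rowK active eqxx.
split; first exact: fullrowsub_free.
split; first exact: fullrowsub_full.
split; first by case: hcos.
split; first exact: cosine_vector_cm_gt0 hcos.
by move=> j; rewrite row_rowsub rowK active eqxx dotvC active.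
Qed.
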